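(* Let $Y$ be a set and $(A_n)_{n=1}^\infty$ a sequence of pairwise disjoint finite subsets of $Y$. Let $\mathcal{X}\subseteq\bigcup_{\emptyset\ne F\in[\mathbb{N}]^{<\infty}}\prod_{n\in F}A_n$ be hereditary, i.e. $(x_n)_{n\in G}\in\mathcal{X}$ whenever $(x_n)_{n\in F}\in\mathcal{X}$ and $\emptyset\ne G\subseteq F$. Let $\mathcal{H}\subseteq[\mathbb{N}]^{<\infty}$ be a regular family and $\beta$ an ordinal with $\omega_1>\iota(\mathcal{H})\ge\beta\ge1$. Suppose that for every nonempty $F\in\mathcal{H}$ there exists $(x_n)_{n\in F}\in\mathcal{X}$. Then there exists a tree $T$ on $Y$ with $T\subseteq\mathcal{X}$ and $o(T)\ge\beta$.
   Context: An element $(x_n)_{n\in F}\in\prod_{n\in F}A_n$ with $F=\{n_1<\dots<n_k\}$ is identified with the finite sequence $(x_{n_1},\dots,x_{n_k})\in Y^k$. A tree on a set $S$ is a subset $T\subseteq\bigcup_{n\ge1}S^n$ closed under taking initial segments. For a well-founded tree $T$, $D(T)$ is the set of $(x_1,\dots,x_n)\in T$ having an extension $(x_1,\dots,x_n,x)\in T$, $D^0(T)=T$, $D^{\gamma+1}(T)=D(D^\gamma(T))$, $D^\gamma(T)=\bigcap_{\delta<\gamma}D^\delta(T)$ for limit $\gamma$, and $o(T)$ is the least $\gamma$ with $D^\gamma(T)=\emptyset$. A family $\mathcal{H}\subseteq[\mathbb{N}]^{<\infty}$ is regular if hereditary, spreading and compact in $2^{\mathbb{N}}$; $\iota(\mathcal{H})$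 is the ordinal $\gamma$ with $\mathcal{H}^{(\gamma)}=\{\emptyset\}$, where $\mathcal{H}^{(\gamma)}$ are the iterated Cantor–Bendixson derived sets (limit points, intersections at limits). *)

From mathcomp Require Import all_boot.
From Stdlib Require List.
Set Implicit Arguments. Unset Strict Implicit. Unset Printing Implicit Defensive.

(** * Countable ordinals as Brouwer trees.
    [OL f] denotes the supremum of the [f n]. Every countable ordinal (< omega_1)
    is represented. *)
Inductive ord : Type := OZ | OS of ord | OL of (nat -> ord).

Inductive ole : ord -> ord -> Prop :=
| ole_Z b : ole OZ b
| ole_SS a b : ole a b -> ole (OS a) (OS b)
| ole_Sr a b : ole a b -> ole a (OS b)
| ole_Ll f b : (forall n, ole (f n) b) -> ole (OL f) b
| ole_Lr a f n : ole a (f n) -> ole a (OL f).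

Definition olt (a b : ord) : Prop := ole (OS a) b.

(** * Families of finite subsets of nat.
    A finite subset of nat is represented by its strictly increasing enumeration. *)
Definition fin_set (s : seq nat) : Prop := sorted ltn s.

Definition fam_hereditary (H : seq nat -> Prop) : Prop :=
  forall s, H s -> forall m : bitseq, H (mask m s).

Definition fam_spreading (H : seq nat -> Prop) : Prop :=
  forall s t, H s -> sorted ltn t -> size t = size s ->
    (forall i, i < size s -> nth 0 s i <= nth 0 t i) -> H t.

(* compact in 2^N, i.e. closed: every point of 2^N (possibly an infinite set,
   given by its indicator A) that is approximated by members of H is in H. *)
Definition fam_compact (H : seq nat -> Prop) : Prop :=
  forall A : nat -> bool,
    (forall m, exists s, H s /\ forall i, i < m -> (i \in s) = A i) ->
    exists s, H s /\ forall i, (i \in s) = A i.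

Definition regular (H : seq nat -> Prop) : Prop :=
  (forall s, H s -> fin_set s) /\ fam_hereditary H /\ fam_spreading H /\ fam_compact H.

(* Cantor-Bendixson derivative (limit points, among finite sets, in 2^N). *)
Definition cb_derived (D : seq nat -> Prop) : seq nat -> Prop :=
  fun s => fin_set s /\
    forall m, exists t, D t /\ t <> s /\ forall i, i < m -> (i \in t) = (i \in s).

Fixpoint cb_iter (H : seq nat -> Prop) (a : ord) : seq nat -> Prop :=
  match a with
  | OZ => H
  | OS b => cb_derived (cb_iter H b)
  | OL f => fun s => forall n, cb_iter H (f n) s
  end.

Definition cb_index_is (H : seq nat -> Prop) (a : ord) : Prop :=
  forall s, cb_iter H a s <-> s = [::].

Fixpoint in_prod (Y : Type) (A : nat -> Y -> Prop) (F : seq nat) (s : seq Y) : Prop :=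
  match F, s with
  | [::], [::] => True
  | n :: F', y :: s' => A n y /\ in_prod A F' s'
  | _, _ => False
  end.

(* s is (the identification of) some (x_n)_{n in F}, F nonempty finite *)
Definition prod_elem (Y : Type) (A : nat -> Y -> Prop) (s : seq Y) : Prop :=
  exists F, F <> [::] /\ fin_set F /\ in_prod A F s.

Definition finite_pred (Y : Type) (P : Y -> Prop) : Prop :=
  exists l : seq Y, forall y, P y -> Stdlib.Lists.List.In y l.

Definition pairwise_disjoint (Y : Type) (A : nat -> Y -> Prop) : Prop :=
  forall n m y, n <> m -> A n y -> A m y -> False.

(* restriction to nonempty G subset of F = nonempty subsequence *)
Definition X_hereditary (Y : Type) (X : seq Y -> Prop) : Prop :=
  forall s, X s -> forall m : bitseq, mask m s <> [::] -> X (mask m s).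

Definition is_tree (Y : Type) (T : seq Y -> Prop) : Prop :=
  (forall s, T s -> s <> [::]) /\
  (forall s k, T s -> 0 < k -> T (take k s)).

Definition tree_well_founded (Y : Type) (T : seq Y -> Prop) : Prop :=
  ~ exists f : nat -> Y, forall n, T (mkseq f n.+1).

Definition tree_der (Y : Type) (T : seq Y -> Prop) : seq Y -> Prop :=
  fun s => T s /\ exists x, T (rcons s x).

Fixpoint tree_iter (Y : Type) (T : seq Y -> Prop) (a : ord) : seq Y -> Prop :=
  match a with
  | OZ => T
  | OS b => tree_der (tree_iter T b)
  | OL f => fun s => forall n, tree_iter T (f n) s
  end.

Definition tree_order_ge (Y : Type) (T : seq Y -> Prop) (b : ord) : Prop :=
  forall d, olt d b -> exists s, tree_iter T d s.

From mathcomp Require Import all_boot zify.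
From Stdlib Require Import Classical IndefiniteDescription.
From Stdlib Require List.
Set Implicit Arguments. Unset Strict Implicit. Unset Printing Implicit Defensive.

(* Take for T the nonempty members of X lying in a product over some set in H.
   By induction on a, every nonempty G in the a-th Cantor-Bendixson derivative
   of H carries a point of the product over G lying in the a-th derivative of T:
   at a successor, G is a proper initial segment of a nearby member of the
   previous derivative of H, and at a limit the product over G is finite, so
   one of its points survives all the (totally ordered) earlier stages.  As
   H^(iota) = {emptyset}, every derivative of H of order below beta has a
   nonempty member, whence o(T) >= beta.  T is well-founded because, the A_n
   being disjoint, the index sets along an infinite branch would form a chain
   of initial segments whose infinite union lies in H by compactness. *)

Lemma ole_total a b : ole a b \/ ole b a.
Proof.
elim: a b => [|a IHa|f IHf] b.
- by left; constructor.
- elim: b => [|b IHb|g IHg].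
  + by right; constructor.
  + by case: (IHa b) => h; [left|right]; apply: ole_SS.
  + case: (classic (exists n, ole (OS a) (g n))) => [[n hn]|hn].
    * by left; apply: ole_Lr hn.
    * right; apply: ole_Ll => n.
      by case: (IHg n) => // h; exfalso; apply: hn; exists n.
- case: (classic (forall n, ole (f n) b)) => [h|/not_all_ex_not [n hn]].
  + by left; apply: ole_Ll.
  + by case: (IHf n b) => // h; right; apply: ole_Lr h.
Qed.

Lemma chain_common_point (T : Type) (P : T -> Prop) (Q : nat -> T -> Prop) :
  finite_pred P -> (forall n, exists x, P x /\ Q n x) ->
  (forall n k, (forall x, Q n x -> Q k x) \/ (forall x, Q k x -> Q n x)) ->
  exists x, P x /\ forall n, Q n x.
Proof.
move=> [l hl] hQ hchain; apply: NNPP => hnone.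
have hmiss x : P x -> exists n, ~ Q n x.
  by move=> hx; apply: not_all_ex_not => hall; apply: hnone; exists x.
suff [N hN] : exists N, forall x, List.In x l -> P x -> ~ Q N x.
  by have [x [hx hQx]] := hQ N; apply: hN x (hl x hx) hx hQx.
elim: l {hl} => [|y l [N hN]]; first by exists 0.
case: (classic (P y)) => [hPy|hPy]; last by exists N => x [<-|/hN].
have [n hn] := hmiss y hPy.
case: (hchain N n) => hNn.
- by exists N => x [<-|/hN //] _ /hNn.
- by exists n => x [<-|hx] // hPx /hNn; apply: hN.
Qed.

Section TreeDerivatives.

Variable Y : Type.

Definition prefix_closed (P : seq Y -> Prop) : Prop :=
  forall s k, P s -> 0 < k -> P (take k s).

Lemma tree_der_take (P : seq Y -> Prop) x k :
  prefix_closed P -> P x -> 0 < k -> k < size x -> tree_der P (take k x).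
Proof.
case: x => [|y x] hP hx hk // hkx; split; first exact: hP.
by exists (nth y (y :: x) k); rewrite -take_nth //; apply: hP.
Qed.

Variable T : seq Y -> Prop.

Lemma tree_iter_sub a s : tree_iter T a s -> T s.
Proof. by elim: a s => [|a IH|f IH] s //= => [[/IH]|/(_ 0) /IH]. Qed.

Lemma tree_iter_antitone a b :
  ole a b -> forall s, tree_iter T b s -> tree_iter T a s.
Proof.
elim=> {a b} /=.
- by move=> b s /tree_iter_sub.
- by move=> a b _ IH s [/IH hs [x /IH hx]]; split; last exists x.
- by move=> a b _ IH s [/IH].
- by move=> f b _ IH s hs n; apply: IH.
- by move=> a f n _ IH s /(_ n) /IH.
Qed.

Lemma tree_iter_prefix_closed a : prefix_closed T -> prefix_closed (tree_iter T a).
Proof.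
move=> hT; elim: a => [|a IH|f IH] //=.
- move=> s k [hs [x hx]] hk.
  case: (ltnP k (size s)) => hks; first exact: tree_der_take.
  by rewrite take_oversize //; split; last exists x.
- by move=> s k hs hk n; apply: IH.
Qed.

End TreeDerivatives.

Definition agree_below (m : nat) (t s : seq nat) : Prop :=
  forall i, i < m -> (i \in t) = (i \in s).

Definition closed_fam (D : seq nat -> Prop) : Prop :=
  forall s, fin_set s -> (forall m, exists t, D t /\ agree_below m t s) -> D s.

Lemma regular_closed H : regular H -> closed_fam H.
Proof.
move=> [hfin [_ [_ hcomp]]] s fs happ.
have [s' [hs' hmem]] := hcomp (fun i => i \in s) happ.
suff -> : s = s' by [].
by apply: (irr_sorted_eq ltn_trans ltnn fs (hfin _ hs')) => i; rewrite hmem.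
Qed.

Lemma cb_derived_sub D : closed_fam D -> forall s, cb_derived D s -> D s.
Proof.
move=> hD s [fs hs]; apply: hD => // m.
by have [t [ht [_ hm]]] := hs m; exists t.
Qed.

Lemma cb_derived_closed D : closed_fam D -> closed_fam (cb_derived D).
Proof.
move=> hD s fs happ; split=> // m.
have [t [ht hm]] := happ m.
case: (eqVneq t s) => [<-|/eqP hts]; first exact: (proj2 ht).
by exists t; split; first exact: cb_derived_sub.
Qed.

Section CantorBendixson.

Variable H : seq nat -> Prop.
Hypothesis H_closed : closed_fam H.

Lemma cb_iter_closed a : closed_fam (cb_iter H a).
Proof.
elim: a => [|a IH|f IH] //=; first exact: cb_derived_closed.
move=> s fs happ n; apply: IH => // m.
by have [t [ht hm]] := happ m; exists t.
Qed.

Lemma cb_iter_sub a s : cb_iter H a s -> H s.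
Proof.
elim: a s => [|a IH|f IH] s //=; last by move/(_ 0)/IH.
by move/(cb_derived_sub (cb_iter_closed (a := a)))/IH.
Qed.

Lemma cb_iter_antitone a b :
  ole a b -> forall s, cb_iter H b s -> cb_iter H a s.
Proof.
elim=> {a b} /=.
- by move=> b s /cb_iter_sub.
- move=> a b _ IH s [fs hs]; split=> // m.
  by have [t [ht hm]] := hs m; exists t; split=> //; apply: IH.
- by move=> a b _ IH s /(cb_derived_sub (cb_iter_closed (a := b))) /IH.
- by move=> f b _ IH s hs n; apply: IH.
- by move=> a f n _ IH s /(_ n) /IH.
Qed.

End CantorBendixson.

Lemma path_ltn_index a s x : path ltn a s -> x \in s -> a + index x s < x.
Proof.
elim: s a => [|b s IH] a //= /andP [hab hs].
rewrite inE eq_sym; case: eqVneq => [<- _|_ /= /(IH _ hs)]; lia.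
Qed.

Lemma sorted_index_leq s x : sorted ltn s -> x \in s -> index x s <= x.
Proof.
case: s => [|a s] //= hs; rewrite inE eq_sym.
case: eqVneq => //= _ /(path_ltn_index hs); lia.
Qed.

Lemma sorted_filter_ltn_take m t :
  sorted ltn t -> [seq x <- t | x < m] = take (count (fun x => x < m) t) t.
Proof.
elim: t => [|a t IH] //= ht.
case: ifP => ham /=; first by rewrite -IH // (path_sorted ht).
have : ~~ has (fun x => x < m) t.
  by apply/hasPn => x /(allP (order_path_min ltn_trans ht)); lia.
by rewrite has_filter negbK -size_filter => /eqP ->.
Qed.

Lemma agree_below_proper_prefix m G t :
  sorted ltn G -> sorted ltn t -> (forall x, x \in G -> x < m) ->
  agree_below m t G -> t <> G -> size G < size t /\ take (size G) t = G.
Proof.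
move=> hG ht hGm hag htG.
have hfilter : [seq x <- t | x < m] = G.
  apply: (irr_sorted_eq ltn_trans ltnn (sorted_filter ltn_trans _ ht) hG) => x.
  rewrite mem_filter; case: (ltnP x m) => hx /=; first exact: hag.
  by apply/esym/negP => /hGm; lia.
have htake : take (size G) t = G.
  by rewrite -{2}hfilter (sorted_filter_ltn_take m ht) -size_filter hfilter.
split=> //; rewrite ltn_neqAle -{2}hfilter size_filter count_size andbT.
by apply/eqP => hsz; apply: htG; rewrite -htake hsz take_size.
Qed.

Lemma compact_no_prefix_chain H (F : nat -> seq nat) :
  (forall s, H s -> fin_set s) -> fam_compact H ->
  (forall n, H (F n)) -> (forall n, size (F n) = n.+1) ->
  ~ (forall n k, n <= k -> F n = take n.+1 (F k)).
Proof.
move=> hfin hcomp hF hsize hchain.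
(* i lies in the union of the chain iff i \in F i: a sorted F n holds i, if at
   all, among its first i+1 entries. *)
have memF_diag n i : i \in F n -> i \in F i.
  case: (leqP n i) => hni; first by rewrite (hchain n i hni); apply: mem_take.
  move=> hi; rewrite (hchain i n (ltnW hni)) in_take //.
  by have := sorted_index_leq (hfin _ (hF n)) hi; lia.
have memF_up n i : i <= n -> i \in F i -> i \in F n.
  by move=> hin; rewrite (hchain i n hin); apply: mem_take.
have happ m : exists t, H t /\ forall i, i < m -> (i \in t) = (i \in F i).
  exists (F m); split=> // i him.
  by apply/idP/idP; [apply: memF_diag | apply: memF_up; apply: ltnW].
have [s [hs hmem]] := hcomp (fun i => i \in F i) happ.
have : size (F (size s)) <= size s.
  apply: uniq_leq_size; first exact: sorted_uniq ltn_trans ltnn _ (hfin _ (hF _)).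
  by move=> x /memF_diag; rewrite hmem.
by rewrite hsize ltnn.
Qed.

Section Products.

Variables (Y : Type) (A : nat -> Y -> Prop).

Lemma in_prod_size F s : in_prod A F s -> size F = size s.
Proof. by elim: F s => [|n F IH] [|y s] //= [_ /IH ->]. Qed.

Lemma in_prod_take F s k : in_prod A F s -> in_prod A (take k F) (take k s).
Proof.
elim: F s k => [|n F IH] [|y s] [|k] //= [hy hs]; split=> //; exact: IH.
Qed.

Lemma in_prod_inj F G s :
  pairwise_disjoint A -> in_prod A F s -> in_prod A G s -> F = G.
Proof.
move=> hdisj; elim: F G s => [|n F IH] [|k G] [|y s] //= [hn hF] [hk hG].
congr cons; last exact: IH hF hG.
by case: (eqVneq n k) => // /eqP hnk; case: (hdisj n k y hnk hn hk).
Qed.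

Lemma finite_pred_in_prod F :
  (forall n, finite_pred (A n)) -> finite_pred (in_prod A F).
Proof.
move=> hfin; elim: F => [|n F [L hL]].
  by exists [:: [::]] => [[|y s]] //= _; left.
have [l hl] := hfin n.
exists (List.flat_map (fun y => List.map (cons y) L) l) => [[|y s]] //= [hy hs].
apply/List.in_flat_map; exists y; split; first exact: hl.
exact/List.in_map/hL.
Qed.

End Products.

Lemma mkseq_take (Y : Type) (f : nat -> Y) n k :
  n <= k -> mkseq f n = take n (mkseq f k).
Proof. by move=> hnk; rewrite /mkseq -map_take take_iota (minn_idPl hnk). Qed.

Section RealisingTree.

Variables (Y : Type) (A : nat -> Y -> Prop) (X : seq Y -> Prop) (H : seq nat -> Prop).
Hypotheses (A_finite : forall n, finite_pred (A n)) (A_disjoint : pairwise_disjoint A).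
Hypotheses (X_her : X_hereditary X) (H_reg : regular H).
Hypothesis X_meets_H : forall F, H F -> F <> [::] -> exists s, X s /\ in_prod A F s.

Definition realising_tree (s : seq Y) : Prop :=
  X s /\ s <> [::] /\ exists F, H F /\ in_prod A F s.

Lemma realising_tree_prefix_closed : prefix_closed realising_tree.
Proof.
have [_ [H_her _]] := H_reg.
move=> s k [hX [hs [F [hF hFs]]]] hk.
have hks : take k s <> [::] by case: s hs {hX hFs} => // y s _; case: k hk.
split; first by rewrite takeEmask; apply: X_her => //; rewrite -takeEmask.
split=> //; exists (take k F); split; last exact: in_prod_take.
by rewrite takeEmask; apply: H_her.
Qed.

Lemma realising_tree_well_founded : tree_well_founded realising_tree.
Proof.
have [H_fin [_ [_ H_compact]]] := H_reg.
move=> [f hf].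
have [F hF] : exists F : nat -> seq nat,
    forall n, H (F n) /\ in_prod A (F n) (mkseq f n.+1).
  apply: (functional_choice (fun n F => H F /\ in_prod A F (mkseq f n.+1))) => n.
  by have [_ [_ [F hF]]] := hf n; exists F.
apply: (compact_no_prefix_chain H_fin H_compact (F := F)).
- by move=> n; case: (hF n).
- by move=> n; rewrite (in_prod_size (proj2 (hF n))) size_mkseq.
- move=> n k hnk; apply: (in_prod_inj A_disjoint (proj2 (hF n))).
  by rewrite (mkseq_take f (hnk : n.+1 <= k.+1)); apply/in_prod_take/(proj2 (hF k)).
Qed.

Lemma cb_iter_realised a G : cb_iter H a G -> G <> [::] ->
  exists x, in_prod A G x /\ tree_iter realising_tree a x.
Proof.
have H_closed := regular_closed H_reg.
elim: a G => [|a IH|f IH] G /=.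
- move=> hG hGne; have [s [hX hGs]] := X_meets_H hG hGne.
  exists s; split=> //; split=> //; split; last by exists G.
  by move=> hs; apply: hGne; apply/size0nil; rewrite (in_prod_size hGs) hs.
- move=> [fG hder] hGne.
  have [t [ht [htG hag]]] := hder (\max_(x <- G) x.+1).
  have ft : fin_set t by apply: (proj1 H_reg); apply: cb_iter_sub ht.
  have [hGt htake] : size G < size t /\ take (size G) t = G.
    by apply: agree_below_proper_prefix fG ft _ hag htG => x hx; apply: leq_bigmax_seq.
  have htne : t <> [::] by move=> ht0; rewrite ht0 in hGt.
  have [x [htx hx]] := IH t ht htne.
  exists (take (size G) x); split; first by rewrite -{1}htake; apply: in_prod_take.
  apply: tree_der_take hx _ _.
  + exact/tree_iter_prefix_closed/realising_tree_prefix_closed.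
  + by case: G hGne {fG hder htG hag hGt htake}.
  + by rewrite -(in_prod_size htx).
- move=> hG hGne.
  apply: chain_common_point (finite_pred_in_prod G A_finite) (fun n => IH n G (hG n) hGne) _.
  by move=> n k; case: (ole_total (f n) (f k)) => h; [right|left]; apply: tree_iter_antitone.
Qed.

Lemma realising_tree_order_ge iota beta :
  cb_index_is H iota -> ole beta iota -> tree_order_ge realising_tree beta.
Proof.
move=> hiota hbi d hd.
have H_closed := regular_closed H_reg.
have [_ hder] : cb_iter H (OS d) [::].
  by apply: (cb_iter_antitone H_closed hd); apply: (cb_iter_antitone H_closed hbi); apply/hiota.
have [t [ht [htne _]]] := hder 0.
by have [x [_ hx]] := cb_iter_realised ht htne; exists x.
Qed.

End RealisingTree.

Theorem proposition21 (Y : Type) (A : nat -> Y -> Prop) (X : seq Y -> Prop)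
    (H : seq nat -> Prop) (iota beta : ord) :
  (forall n, finite_pred (A n)) ->
  pairwise_disjoint A ->
  (forall s, X s -> prod_elem A s) ->
  X_hereditary X ->
  regular H ->
  cb_index_is H iota ->
  ole beta iota ->
  ole (OS OZ) beta ->
  (forall F, H F -> F <> [::] -> exists s, X s /\ in_prod A F s) ->
  exists T : seq Y -> Prop,
    is_tree T /\ (forall s, T s -> X s) /\ tree_well_founded T /\ tree_order_ge T beta.
Proof.
(* T is cut down to products over members of H by definition. *)
move=> A_finite A_disjoint _ X_her H_reg hiota hbi _ X_meets_H.
exists (realising_tree A X H); split; [split|split; [|split]].
- by move=> s [_ []].
- exact: realising_tree_prefix_closed.
- by move=> s [].
- exact: realising_tree_well_founded.
- exact: realising_tree_order_ge hiota hbi.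
Qed.
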